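(* Let $f\in\mathfrak B^*((A,V);B;\alpha)$, let $s\ge1$, let $\psi:[0,\infty)\to[0,\infty)$ be a continuous increasing function with $\psi(0)=0$ and $\int_0^1\frac{\psi(t)^{1/s}}{t}\,dt<\infty$, and let $\{b_n\}_{n\in\mathbb N}\subset(0,\infty)$ be such that the series $\sum_{n=1}^\infty\frac{\ln b_n}{n^2}$ converges. Then $\liminf_{n\to\infty}n^s\,\psi\big(b_nE_n(f)\big)=0$.
   Context: $\mathbb F\in\{\mathbb R,\mathbb C\}$. $A$ is an infinite-dimensional separable Banach space over $\mathbb F$ and $V_0\subsetneq V_1\subsetneq\cdots\subset A$ are finite-dimensional subspaces whose union $V$ is dense in $A$. $B$ is a Banach space over $\mathbb F$, $\alpha$ a reasonable crossnorm on $A\otimes B$, $A\hat\otimes_\alpha B$ the completion. $E_n(x)=\inf_{h\in V_n\otimes B}\|x-h\|_{A\hat\otimes_\alpha B}$. $\mathfrak B^*((A,V);B;\alpha)$ is the set of $x\in A\hat\otimes_\alpha B$ with $\prod_{n\ge1}E_n(x)^{1/n^2}=0$, i.e. $\sum_n n^{-2}\ln E_n(x)=-\infty$ (with $\ln0=-\infty$). *)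

From Stdlib Require Import Reals.
Open Scope R_scope.

(* Real power with the convention 0^y = 0 (so that ln 0 = -oo behaves as
   in the paper); for x > 0 it is Rpower x y = exp (y ln x). *)
Definition rpow0 (x y : R) : R :=
  if Rle_dec x 0 then 0 else Rpower x y.

Definition IsInf (S : R -> Prop) (e : R) : Prop :=
  (forall r, S r -> e <= r) /\ (forall l, (forall r, S r -> l <= r) -> l <= e).

Definition BestApprox {X : Type} (dist : X -> X -> R) (W : nat -> X -> Prop)
  (x : X) (n : nat) (e : R) : Prop :=
  IsInf (fun r => exists h, W n h /\ r = dist x h) e.

(* prod_{n>=1} E_n^{1/n^2} = 0, as the limit of partial products. *)
Definition partial_prod (E : nat -> R) (N : nat) : R :=
  prod_f_R0 (fun k => rpow0 (E (S k)) (/ (INR (S k))^2)) N.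

Definition BstarCond (E : nat -> R) : Prop :=
  Un_cv (partial_prod E) 0.

Definition cont_on_nonneg (psi : R -> R) : Prop :=
  forall x, 0 <= x -> limit1_in psi (fun t => 0 <= t) (psi x) x.

(* int_0^1 g(t) dt < oo, as an improper Riemann integral at 0 of a
   nonnegative integrand: uniformly bounded integrals over [eps,1]. *)
Definition improper_int_finite_0_1 (g : R -> R) : Prop :=
  exists M : R, forall eps : R, 0 < eps <= 1 ->
    exists pr : Riemann_integrable g eps 1, RiemannInt pr <= M.

Definition log_series_converges (b : nat -> R) : Prop :=
  exists l : R, Un_cv (fun N => sum_f_R0 (fun k => ln (b (S k)) / (INR (S k))^2) N) l.

Definition liminf_is_zero (u : nat -> R) : Prop :=
  (forall eps, 0 < eps -> exists N, forall n, (N <= n)%nat -> - eps < u n) /\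
  (forall eps, 0 < eps -> forall N, exists n, (N <= n)%nat /\ u n < eps).

From Stdlib Require Import Reals Lra Lia Classical.
Open Scope R_scope.

(* If the liminf were positive, then psi(b_n E_n)^(1/s) >= c/n for all n, so
   b_n E_n < 2^-j forces n >= c / psi(2^-j)^(1/s).  Bounding
   -ln(b_n E_n) <= ln 2 * (1 + #{j : b_n E_n < 2^-j}) and summing against
   1/n^2 then gives sum_n ln(b_n E_n)/n^2 >= -C (1 + sum_j psi(2^-j)^(1/s)),
   and the dyadic sum is finite by comparison with the integral of
   psi(t)^(1/s)/t.  Subtracting the convergent series of ln b_n / n^2 bounds
   sum_n ln E_n / n^2 from below, so prod_n E_n^(1/n^2) stays away from 0. *)

Section BestApproximation.
Variables (X : Type) (dist : X -> X -> R) (W : nat -> X -> Prop).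
Variables (x : X) (E : nat -> R).
Hypothesis hE : forall n, BestApprox dist W x n (E n).

Lemma BestApprox_nonneg : (forall u v, 0 <= dist u v) -> forall n, 0 <= E n.
Proof.
  intros hdist n. destruct (hE n) as [_ Hglb].
  apply Hglb. intros r [h [_ ->]]. apply hdist.
Qed.

Lemma BestApprox_antitone : (forall n h, W n h -> W (S n) h) ->
  forall m n, (m <= n)%nat -> E n <= E m.
Proof.
  intros hWnest m n Hmn. induction Hmn as [|n _ IH]; [lra|].
  enough (E (S n) <= E n) by lra.
  destruct (hE n) as [_ Hglb]. apply Hglb. intros r [h [Hh ->]].
  destruct (hE (S n)) as [Hlb _]. apply Hlb. exists h; auto.
Qed.

End BestApproximation.

Lemma uniform_lower_bound (u : nat -> R) (N : nat) (c : R) :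
  0 < c -> (forall n, 0 < u n) -> (forall n, (N <= n)%nat -> c <= u n) ->
  exists c', 0 < c' /\ forall n, c' <= u n.
Proof.
  revert c. induction N as [|N IH]; intros c Hc Hu Hge.
  - exists c. split; [exact Hc| intros n; apply Hge; lia].
  - apply (IH (Rmin c (u N))); [apply Rmin_pos; auto| exact Hu|].
    intros n Hn. destruct (Nat.eq_dec n N) as [->|Hne]; [apply Rmin_r|].
    apply Rle_trans with c; [apply Rmin_l| apply Hge; lia].
Qed.

Lemma Un_cv_bounded_above (u : nat -> R) (l : R) :
  Un_cv u l -> exists B, forall n, u n <= B.
Proof.
  intros Hu. destruct (maj_by_pos u (exist _ l Hu)) as [B [_ HB]].
  exists B. intros n. pose proof (HB n). pose proof (Rle_abs (u n)). lra.
Qed.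

Lemma sum_f_R0_swap (F : nat -> nat -> R) (J K : nat) :
  sum_f_R0 (fun k => sum_f_R0 (fun j => F k j) J) K =
  sum_f_R0 (fun j => sum_f_R0 (fun k => F k j) K) J.
Proof.
  induction K as [|K IH]; simpl; [reflexivity|].
  rewrite IH, <- plus_sum. reflexivity.
Qed.

Lemma sum_f_R0_telescope (g : nat -> R) (K : nat) :
  sum_f_R0 (fun k => g k - g (S k)) K = g 0%nat - g (S K).
Proof. induction K as [|K IH]; simpl; [ring| rewrite IH; ring]. Qed.

Lemma inv_sq_le_telescope (n : R) : 1 <= n -> / n ^ 2 <= 2 * (/ n - / (n + 1)).
Proof.
  intros Hn.
  replace (2 * (/ n - / (n + 1))) with (/ n ^ 2 * (2 * n / (n + 1))) by (field; lra).
  rewrite <- (Rmult_1_r (/ n ^ 2)) at 1.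
  apply Rmult_le_compat_l; [left; apply Rinv_0_lt_compat, pow_lt; lra|].
  apply Rmult_le_reg_r with (n + 1); [lra|].
  unfold Rdiv. rewrite Rmult_assoc, Rinv_l by lra. lra.
Qed.

(* Telescope against min(1/n, T). *)
Lemma sum_inv_sq_tail_le (T : R) (K : nat) : 0 <= T ->
  sum_f_R0 (fun k => if Rle_dec (/ INR (S k)) T then / INR (S k) ^ 2 else 0) K
  <= 2 * T.
Proof.
  intros HT. set (phi := fun n => Rmin (/ INR n) T).
  apply Rle_trans with (sum_f_R0 (fun k => (phi (S k) - phi (S (S k))) * 2) K).
  - apply sum_Rle. intros k _.
    assert (Hn : 1 <= INR (S k)) by (apply (le_INR 1); lia).
    assert (Hinv : / INR (S (S k)) <= / INR (S k)).
    { apply Rinv_le_contravar; [lra| rewrite (S_INR (S k)); lra]. }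
    unfold phi. destruct (Rle_dec (/ INR (S k)) T) as [Hle|_].
    + rewrite !Rmin_left by lra. rewrite (S_INR (S k)) in *.
      pose proof (inv_sq_le_telescope (INR (S k)) Hn). lra.
    + assert (Rmin (/ INR (S (S k))) T <= Rmin (/ INR (S k)) T).
      { apply Rmin_glb; [| apply Rmin_r].
        apply Rle_trans with (/ INR (S (S k))); [apply Rmin_l| exact Hinv]. }
      lra.
  - rewrite <- scal_sum, sum_f_R0_telescope.
    assert (0 <= phi (S (S K))).
    { apply Rmin_glb; [left; apply Rinv_0_lt_compat, lt_0_INR; lia| exact HT]. }
    assert (phi 1%nat <= T) by apply Rmin_r.
    lra.
Qed.

Lemma sum_inv_sq_le_2 (K : nat) : sum_f_R0 (fun k => / INR (S k) ^ 2) K <= 2.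
Proof.
  replace (sum_f_R0 (fun k => / INR (S k) ^ 2) K) with
    (sum_f_R0 (fun k => if Rle_dec (/ INR (S k)) 1 then / INR (S k) ^ 2 else 0) K).
  { pose proof (sum_inv_sq_tail_le 1 K). lra. }
  apply sum_eq. intros k _.
  destruct (Rle_dec (/ INR (S k)) 1) as [_|Hgt]; [reflexivity|].
  exfalso. apply Hgt. rewrite <- Rinv_1.
  apply Rinv_le_contravar; [lra| apply (le_INR 1); lia].
Qed.

Lemma rpow0_nonneg (p e : R) : 0 <= rpow0 p e.
Proof.
  unfold rpow0. destruct (Rle_dec p 0); [lra| left; apply exp_pos].
Qed.

Lemma rpow0_pos (p e : R) : 0 < p -> 0 < rpow0 p e.
Proof.
  intros Hp. unfold rpow0. destruct (Rle_dec p 0); [lra| apply exp_pos].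
Qed.

Lemma rpow0_le_compat_l (e p q : R) : 0 <= e -> p <= q -> rpow0 p e <= rpow0 q e.
Proof.
  intros He Hpq. unfold rpow0.
  destruct (Rle_dec p 0); destruct (Rle_dec q 0).
  - lra.
  - left; apply exp_pos.
  - lra.
  - apply Rle_Rpower_l; lra.
Qed.

Lemma root_lower_bound (n s eps p : R) :
  0 < n -> 0 < s -> 0 < eps -> eps <= Rpower n s * p ->
  Rpower eps (/ s) <= n * rpow0 p (/ s).
Proof.
  intros Hn Hs Heps Hle.
  assert (Hns : 0 < Rpower n s) by apply exp_pos.
  assert (Hp : 0 < p) by nra.
  unfold rpow0. destruct (Rle_dec p 0) as [|_]; [lra|].
  replace n with (Rpower (Rpower n s) (/ s)) at 1.
  2:{ rewrite Rpower_mult, Rinv_r, Rpower_1; lra. }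
  rewrite Rpower_mult_distr by auto.
  apply Rle_Rpower_l; [left; apply Rinv_0_lt_compat|]; lra.
Qed.

Lemma half_pow_pos (n : nat) : 0 < (/ 2) ^ n.
Proof. apply pow_lt; lra. Qed.

Lemma half_pow_antitone (m n : nat) : (m <= n)%nat -> (/ 2) ^ n <= (/ 2) ^ m.
Proof.
  induction 1 as [|n _ IH]; [lra|].
  simpl. pose proof (half_pow_pos n). lra.
Qed.

Lemma half_pow_le_eventually (y : R) : 0 < y ->
  exists J, forall j, (J <= j)%nat -> (/ 2) ^ j <= y.
Proof.
  intros Hy. destruct (pow_lt_1_zero (/ 2) ltac:(rewrite Rabs_pos_eq; lra) y Hy)
    as [J HJ].
  exists J. intros j Hj. specialize (HJ j Hj).
  rewrite Rabs_pos_eq in HJ by (left; apply half_pow_pos). lra.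
Qed.

Definition lt_indicator (u t : R) : R := if Rlt_dec u t then 1 else 0.

Lemma lt_indicator_nonneg (u t : R) : 0 <= lt_indicator u t.
Proof. unfold lt_indicator; destruct (Rlt_dec u t); lra. Qed.

Lemma neg_ln_le_half_pow (u : R) (m : nat) :
  0 < u -> (/ 2) ^ m <= u -> - ln u <= INR m * ln 2.
Proof.
  intros Hu Hm.
  assert (Hln : ln ((/ 2) ^ m) <= ln u).
  { destruct (Rle_lt_or_eq_dec _ _ Hm) as [Hlt|<-]; [|lra].
    left. apply ln_increasing; [apply half_pow_pos| exact Hlt]. }
  rewrite ln_pow, ln_Rinv in Hln by lra. lra.
Qed.

(* Each dyadic level 2^-(j+1) lying above u contributes one ln 2. *)
Lemma neg_ln_le_dyadic_count (u : R) (J : nat) : 0 < u -> (/ 2) ^ S J <= u ->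
  - ln u <= ln 2 * (1 + sum_f_R0 (fun j => lt_indicator u ((/ 2) ^ S j)) J).
Proof.
  intros Hu. pose proof ln_lt_2 as Hl2.
  induction J as [|J IH]; intros HJ; cbn [sum_f_R0].
  - pose proof (neg_ln_le_half_pow u 1 Hu HJ). simpl INR in *.
    pose proof (lt_indicator_nonneg u ((/ 2) ^ 1)). nra.
  - pose proof (lt_indicator_nonneg u ((/ 2) ^ S (S J))).
    destruct (Rle_dec ((/ 2) ^ S J) u) as [Hle|Hlt].
    + specialize (IH Hle). nra.
    + assert (Hcount : INR (S J) <= sum_f_R0 (fun j => lt_indicator u ((/ 2) ^ S j)) J).
      { rewrite <- (Rmult_1_l (INR (S J))), <- sum_cte. apply sum_Rle. intros j Hj.
        unfold lt_indicator. destruct (Rlt_dec u ((/ 2) ^ S j)) as [|Hge]; [lra|].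
        exfalso. pose proof (half_pow_antitone (S j) (S J) ltac:(lia)). lra. }
      pose proof (neg_ln_le_half_pow u _ Hu HJ).
      rewrite (S_INR (S J)) in *. nra.
Qed.

Lemma RiemannInt_ge_const (g : R -> R) (lo hi m : R) (pr : Riemann_integrable g lo hi) :
  lo <= hi -> (forall t, lo < t < hi -> m <= g t) -> m * (hi - lo) <= RiemannInt pr.
Proof.
  intros Hle H.
  rewrite <- (RiemannInt_P15 (RiemannInt_P14 lo hi m)).
  apply RiemannInt_P19; auto.
Qed.

Section DyadicIntegral.
Variable g : R -> R.
Hypothesis g_nonneg : forall t, 0 <= g t.
Hypothesis g_mono : forall u v, 0 < u -> u <= v -> g u <= g v.

(* On [2^-(j+2), 2^-(j+1)] the integrand g(t)/t is at least g(2^-(j+2)) 2^(j+1),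
   and the interval has length 2^-(j+2). *)
Lemma dyadic_sum_le_integral (J : nat)
  (pr : Riemann_integrable (fun t => g t / t) ((/ 2) ^ S J) 1) :
  / 2 * sum_f_R0 (fun j => g ((/ 2) ^ S j)) J <= RiemannInt pr.
Proof.
  induction J as [|J IH]; cbn [sum_f_R0].
  - revert pr. rewrite pow_1. intros pr.
    replace (/ 2 * g (/ 2)) with (g (/ 2) * (1 - / 2)) by field.
    apply RiemannInt_ge_const; [lra|]. intros t Ht.
    assert (g (/ 2) <= g t) by (apply g_mono; lra).
    assert (g t <= g t / t).
    { unfold Rdiv. rewrite <- (Rmult_1_r (g t)) at 1.
      apply Rmult_le_compat_l; [apply g_nonneg|].
      rewrite <- Rinv_1. apply Rinv_le_contravar; lra. }
    lra.
  - set (hi := (/ 2) ^ S J) in *. set (lo := (/ 2) ^ S (S J)) in *.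
    assert (Hlo : lo = / 2 * hi) by reflexivity.
    assert (Hhi : 0 < hi) by apply half_pow_pos.
    assert (Hhi1 : hi <= 1) by apply (half_pow_antitone 0 (S J)), le_0_n.
    assert (Hr : lo <= hi <= 1) by lra.
    pose (pr_lo := RiemannInt_P22 pr Hr). pose (pr_hi := RiemannInt_P23 pr Hr).
    rewrite <- (RiemannInt_P26 pr_lo pr_hi pr).
    specialize (IH pr_hi).
    assert (Hpiece : g lo / hi * (hi - lo) <= RiemannInt pr_lo).
    { apply RiemannInt_ge_const; [lra|]. intros t Ht.
      assert (g lo <= g t) by (apply g_mono; lra).
      pose proof (g_nonneg lo).
      unfold Rdiv. apply Rle_trans with (g lo * / t).
      - apply Rmult_le_compat_l; [lra|]. apply Rinv_le_contravar; lra.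
      - apply Rmult_le_compat_r; [left; apply Rinv_0_lt_compat|]; lra. }
    replace (g lo / hi * (hi - lo)) with (/ 2 * g lo) in Hpiece by (rewrite Hlo; field; lra).
    lra.
Qed.

End DyadicIntegral.

Section WeightedLogSum.
Variables (g : R -> R) (x : nat -> R) (c : R).
Hypothesis g_nonneg : forall t, 0 <= g t.
Hypothesis g_mono : forall u v, 0 < u -> u <= v -> g u <= g v.
Hypothesis c_pos : 0 < c.
Hypothesis x_pos : forall k, 0 < x (S k).
Hypothesis x_lower : forall k, c <= INR (S k) * g (x (S k)).

(* x_(k+1) < t forces 1/(k+1) <= g(t)/c, so only a tail of the weights 1/n^2 survives. *)
Lemma sum_lt_indicator_le (t : R) (K : nat) :
  sum_f_R0 (fun k => lt_indicator (x (S k)) t * / INR (S k) ^ 2) K <= 2 * (g t / c).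
Proof.
  assert (Hgt : 0 <= g t / c) by (apply Rmult_le_pos; [| left; apply Rinv_0_lt_compat]; auto).
  eapply Rle_trans; [| apply (sum_inv_sq_tail_le _ K Hgt)].
  apply sum_Rle. intros k _.
  assert (Hn : 0 < INR (S k)) by (apply lt_0_INR; lia).
  assert (Hw : 0 <= / INR (S k) ^ 2) by (left; apply Rinv_0_lt_compat, pow_lt; lra).
  unfold lt_indicator. destruct (Rlt_dec (x (S k)) t) as [Hlt|_].
  - assert (Hle : / INR (S k) <= g t / c).
    { pose proof (g_mono _ _ (x_pos k) (Rlt_le _ _ Hlt)).
      pose proof (x_lower k).
      apply Rmult_le_reg_l with (INR (S k) * c); [nra|].
      replace (INR (S k) * c * / INR (S k)) with c by (field; lra).
      replace (INR (S k) * c * (g t / c)) with (INR (S k) * g t) by (field; lra).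
      nra. }
    destruct (Rle_dec (/ INR (S k)) (g t / c)); [lra| contradiction].
  - destruct (Rle_dec (/ INR (S k)) (g t / c)); lra.
Qed.

Lemma dyadic_threshold (K : nat) :
  exists J, forall k, (k <= K)%nat -> (/ 2) ^ S J <= x (S k).
Proof.
  induction K as [|K [J HJ]].
  - destruct (half_pow_le_eventually _ (x_pos 0)) as [J HJ].
    exists J. intros k Hk. replace k with 0%nat by lia. apply HJ. lia.
  - destruct (half_pow_le_eventually _ (x_pos (S K))) as [J' HJ'].
    exists (max J J'). intros k Hk.
    destruct (Nat.eq_dec k (S K)) as [->|Hne]; [apply HJ'; lia|].
    apply Rle_trans with ((/ 2) ^ S J); [apply half_pow_antitone; lia| apply HJ; lia].
Qed.

Lemma weighted_log_sum_lower_bound (M : R) :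
  (forall J, sum_f_R0 (fun j => g ((/ 2) ^ S j)) J <= M) ->
  forall K, - ln 2 * (2 + 2 / c * M) <= sum_f_R0 (fun k => ln (x (S k)) / INR (S k) ^ 2) K.
Proof.
  intros HM K. destruct (dyadic_threshold K) as [J HJ].
  pose proof ln_lt_2 as Hl2.
  set (ind := fun k j => lt_indicator (x (S k)) ((/ 2) ^ S j) * / INR (S k) ^ 2).
  apply Rle_trans with
    (sum_f_R0 (fun k => (/ INR (S k) ^ 2 + sum_f_R0 (ind k) J) * - ln 2) K).
  - rewrite <- scal_sum, plus_sum. unfold ind. rewrite sum_f_R0_swap.
    pose proof (sum_inv_sq_le_2 K).
    assert (Hlevels : sum_f_R0 (fun j => sum_f_R0 (fun k =>
        lt_indicator (x (S k)) ((/ 2) ^ S j) * / INR (S k) ^ 2) K) J <= 2 / c * M).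
    { apply Rle_trans with (sum_f_R0 (fun j => g ((/ 2) ^ S j) * (2 / c)) J).
      - apply sum_Rle. intros j _. pose proof (sum_lt_indicator_le ((/ 2) ^ S j) K).
        unfold Rdiv in *. lra.
      - rewrite <- scal_sum. apply Rmult_le_compat_l; [| apply HM].
        apply Rmult_le_pos; [lra| left; apply Rinv_0_lt_compat; lra]. }
    nra.
  - apply sum_Rle. intros k Hk.
    pose proof (neg_ln_le_dyadic_count _ J (x_pos k) (HJ k Hk)) as Hb.
    assert (Hw : 0 <= / INR (S k) ^ 2).
    { left; apply Rinv_0_lt_compat, pow_lt, lt_0_INR; lia. }
    unfold ind. rewrite <- scal_sum. unfold Rdiv. nra.
Qed.

End WeightedLogSum.

Lemma partial_prod_exp (E : nat -> R) (K : nat) : (forall k, 0 < E (S k)) ->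
  partial_prod E K = exp (sum_f_R0 (fun k => ln (E (S k)) / INR (S k) ^ 2) K).
Proof.
  intros HE.
  assert (Hterm : forall k,
    rpow0 (E (S k)) (/ INR (S k) ^ 2) = exp (ln (E (S k)) / INR (S k) ^ 2)).
  { intros k. unfold rpow0. destruct (Rle_dec (E (S k)) 0) as [Hle|_].
    - pose proof (HE k); lra.
    - unfold Rpower, Rdiv. f_equal. ring. }
  unfold partial_prod. induction K as [|K IH]; cbn [prod_f_R0 sum_f_R0].
  - apply Hterm.
  - rewrite IH, Hterm, exp_plus. reflexivity.
Qed.

Lemma not_BstarCond_of_log_sum_bounded_below (E : nat -> R) (L : R) :
  (forall k, 0 < E (S k)) ->
  (forall K, L <= sum_f_R0 (fun k => ln (E (S k)) / INR (S k) ^ 2) K) ->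
  ~ BstarCond E.
Proof.
  intros HE HL Hcv.
  destruct (Hcv (exp L) (exp_pos L)) as [K HK]. specialize (HK K (le_n K)).
  unfold Rdist in HK. rewrite Rminus_0_r, partial_prod_exp in HK by exact HE.
  rewrite Rabs_pos_eq in HK by (left; apply exp_pos).
  destruct (Rle_lt_or_eq_dec _ _ (HL K)) as [Hlt|Heq].
  - apply exp_increasing in Hlt. lra.
  - rewrite Heq in HK. lra.
Qed.

Lemma antitone_pos (E : nat -> R) (N : nat) :
  (forall m n, (m <= n)%nat -> E n <= E m) -> (forall n, 0 <= E n) ->
  (forall n, (N <= n)%nat -> E n <> 0) -> forall n, 0 < E n.
Proof.
  intros Hanti Hnonneg Hnz n.
  pose proof (Hnz (max n N) (Nat.le_max_r _ _)).
  pose proof (Hnonneg (max n N)). pose proof (Hanti n (max n N) (Nat.le_max_l _ _)).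
  lra.
Qed.

Section PsiLogSum.
Variables (psi : R -> R) (s : R).
Hypothesis s_pos : 0 < s.
Hypothesis hpsi_incr : forall x y, 0 <= x -> x < y -> psi x < psi y.
Hypothesis hpsi_int : improper_int_finite_0_1 (fun t => rpow0 (psi t) (/ s) / t).

Lemma rpow0_psi_mono (u v : R) :
  0 < u -> u <= v -> rpow0 (psi u) (/ s) <= rpow0 (psi v) (/ s).
Proof.
  intros Hu Huv. apply rpow0_le_compat_l; [left; apply Rinv_0_lt_compat; lra|].
  destruct (Rle_lt_or_eq_dec _ _ Huv) as [Hlt|<-]; [left; apply hpsi_incr|]; lra.
Qed.

Lemma dyadic_psi_sum_bounded :
  exists M, forall J, sum_f_R0 (fun j => rpow0 (psi ((/ 2) ^ S j)) (/ s)) J <= M.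
Proof.
  destruct hpsi_int as [M HM]. exists (2 * M). intros J.
  destruct (HM ((/ 2) ^ S J)) as [pr Hpr].
  { split; [apply half_pow_pos| apply (half_pow_antitone 0), le_0_n]. }
  pose proof (Rle_trans _ _ _ (dyadic_sum_le_integral _ (fun t => rpow0_nonneg _ _)
    rpow0_psi_mono J pr) Hpr).
  lra.
Qed.

Lemma psi_log_sum_bounded_below (x : nat -> R) (c : R) :
  0 < c -> (forall k, 0 < x (S k)) ->
  (forall k, c <= INR (S k) * rpow0 (psi (x (S k))) (/ s)) ->
  exists L, forall K, L <= sum_f_R0 (fun k => ln (x (S k)) / INR (S k) ^ 2) K.
Proof.
  intros Hc Hx Hslow. destruct dyadic_psi_sum_bounded as [M HM].
  exists (- ln 2 * (2 + 2 / c * M)).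
  exact (weighted_log_sum_lower_bound (fun t => rpow0 (psi t) (/ s)) x c
    (fun t => rpow0_nonneg _ _) rpow0_psi_mono Hc Hx Hslow M HM).
Qed.

End PsiLogSum.

Theorem lemma5p1
  (X : Type) (dist : X -> X -> R)
  (hdist : forall x y, 0 <= dist x y)
  (W : nat -> X -> Prop)
  (hWne : forall n, exists h, W n h)
  (hWnest : forall n h, W n h -> W (S n) h)
  (f : X) (E : nat -> R)
  (hE : forall n, BestApprox dist W f n (E n))
  (hf : BstarCond E)
  (s : R) (hs : 1 <= s)
  (psi : R -> R)
  (hpsi_nonneg : forall t, 0 <= t -> 0 <= psi t)
  (hpsi_cont : cont_on_nonneg psi)
  (hpsi_incr : forall x y, 0 <= x -> x < y -> psi x < psi y)
  (hpsi0 : psi 0 = 0)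
  (hpsi_int : improper_int_finite_0_1 (fun t => rpow0 (psi t) (/ s) / t))
  (b : nat -> R) (hb : forall n, (1 <= n)%nat -> 0 < b n)
  (hbser : log_series_converges b) :
  liminf_is_zero (fun n => Rpower (INR n) s * psi (b n * E n)).
Proof.
  pose proof (BestApprox_nonneg X dist W f E hE hdist) as E_nonneg.
  assert (x_nonneg : forall n, (1 <= n)%nat -> 0 <= b n * E n).
  { intros n Hn. apply Rmult_le_pos; [left; apply hb|]; auto. }
  split.
  { intros eps Heps. exists 1%nat. intros n Hn.
    pose proof (exp_pos (s * ln (INR n))). pose proof (hpsi_nonneg _ (x_nonneg n Hn)).
    unfold Rpower. nra. }
  intros eps Heps N. apply NNPP. intros Hnone.
  assert (Hge : forall n, (S N <= n)%nat -> eps <= Rpower (INR n) s * psi (b n * E n)).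
  { intros n Hn. apply Rnot_lt_le. intros Hlt. apply Hnone. exists n. split; [lia| exact Hlt]. }
  assert (E_pos : forall n, 0 < E n).
  { apply (antitone_pos E (S N) (BestApprox_antitone X dist W f E hE hWnest) E_nonneg).
    intros n Hn H0. specialize (Hge n Hn). rewrite H0, Rmult_0_r, hpsi0, Rmult_0_r in Hge. lra. }
  assert (x_pos : forall k, 0 < b (S k) * E (S k)).
  { intros k. apply Rmult_lt_0_compat; [apply hb; lia| apply E_pos]. }
  destruct (uniform_lower_bound (fun k => INR (S k) * rpow0 (psi (b (S k) * E (S k))) (/ s))
    N (Rpower eps (/ s))) as [c [Hc Hslow]].
  - apply exp_pos.
  - intros k. apply Rmult_lt_0_compat; [apply lt_0_INR; lia|].
    apply rpow0_pos. rewrite <- hpsi0. apply hpsi_incr; [lra| apply x_pos].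
  - intros k Hk. apply root_lower_bound; [apply lt_0_INR; lia| lra| lra| apply Hge; lia].
  - destruct (psi_log_sum_bounded_below psi s ltac:(lra) hpsi_incr hpsi_int
      (fun n => b n * E n) c Hc x_pos Hslow) as [L HL].
    destruct hbser as [l Hl]. destruct (Un_cv_bounded_above _ _ Hl) as [B HB].
    apply (not_BstarCond_of_log_sum_bounded_below E (L - B) (fun k => E_pos (S k))); [|exact hf].
    intros K. rewrite (sum_eq _ (fun k => ln (b (S k) * E (S k)) / INR (S k) ^ 2
                                          - ln (b (S k)) / INR (S k) ^ 2)), minus_sum.
    + pose proof (HL K). pose proof (HB K). lra.
    + intros k _. rewrite ln_mult by first [apply E_pos | apply hb; lia]. unfold Rdiv. ring.
Qed.
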